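(* Let $M>0$, $0<a<M$, $\mu>0$, $m\in\mathbb{Z}\setminus\{0\}$, $n\in\{0,1,2,\dots\}$, $l\in\{|m|,|m|+1,\dots\}$, and define $$\alpha_1=\frac{ma}{\mu M^2},\quad \alpha_2=\frac{2n+1}{\mu M}\sqrt{1-\frac{a^2}{M^2}},\quad \alpha=\alpha_1-i\alpha_2,\quad \epsilon=2\sqrt{1-\frac{a^2}{M^2}},\quad \beta=6-\frac{l(l+1)}{\mu^2M^2}.$$ Assume $\beta\geq 0$ and define $$q(z)=z^4+\frac{4z}{\beta+\epsilon}\left[(2+\epsilon)(z^2+1)+\alpha(z^2-1)\right]+2\,\frac{16-\beta+3\epsilon}{\beta+\epsilon}\,z^2+1,\quad z\in\mathbb{C}.$$ Then $q$ has no real roots. In addition, if $\alpha_1\geq 0$ and $0\leq\beta\leq 16+3\epsilon$, then $$\lim_{x\to\infty,\ x\in\mathbb{R}}\arctan\left(\frac{\mathrm{Im}(q(x))}{\mathrm{Re}(q(x))}\right)=0.$$ *)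

From Stdlib Require Import Reals ZArith.
From Coquelicot Require Import Coquelicot.
Open Scope R_scope.

Definition alpha1 (M a mu : R) (m : Z) : R := IZR m * a / (mu * M ^ 2).
Definition alpha2 (M a mu : R) (n : nat) : R :=
  (2 * INR n + 1) / (mu * M) * sqrt (1 - a ^ 2 / M ^ 2).
Definition alphaC (M a mu : R) (m : Z) (n : nat) : C :=
  (alpha1 M a mu m, - alpha2 M a mu n).
Definition eps (M a : R) : R := 2 * sqrt (1 - a ^ 2 / M ^ 2).
Definition beta (M mu : R) (l : nat) : R :=
  6 - INR l * (INR l + 1) / (mu ^ 2 * M ^ 2).

Definition qpoly (M a mu : R) (m : Z) (n l : nat) (z : C) : C :=
  let e := eps M a in
  let b := beta M mu l in
  let al := alphaC M a mu m n in
  (z ^ 4 + RtoC (4 / (b + e)) * z *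
     (RtoC (2 + e) * (z ^ 2 + 1) + al * (z ^ 2 - 1))
   + RtoC (2 * ((16 - b + 3 * e) / (b + e))) * z ^ 2 + 1)%C.

(* On the real axis Im q(x) = -(4 alpha2 / (beta + eps)) (x^3 - x), so a real
   root must be one of 0, 1, -1; there Re q equals 1, 16 (3 + eps) / (beta + eps)
   and 16 / (beta + eps), none of which vanishes.  Moreover Im q / Re q is a cubic
   over a monic quartic, so it tends to 0 at +oo, and so does its arctangent. *)
From Stdlib Require Import Reals ZArith Lra Psatz.
From Coquelicot Require Import Coquelicot.
Open Scope R_scope.

Lemma Rdiv_neq_0 (r s : R) : r <> 0 -> s <> 0 -> r / s <> 0.
Proof.
  intros Hr Hs. apply Rmult_integral_contrapositive_currified; [exact Hr|].
  apply Rinv_neq_0_compat, Hs.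
Qed.

Lemma is_lim_Rabs_le_0 (f h : R -> R) (x : Rbar) :
  Rbar_locally' x (fun y => Rabs (f y) <= h y) -> is_lim h x 0 -> is_lim f x 0.
Proof.
  intros Hfh Hh.
  apply (is_lim_le_le_loc (fun y => - h y) h).
  - apply (filter_imp (fun y => Rabs (f y) <= h y)); [|exact Hfh].
    intros y Hy. apply Rabs_le_between. exact Hy.
  - replace (Finite 0) with (Rbar_opp 0) by (simpl; f_equal; ring).
    apply is_lim_opp. exact Hh.
  - exact Hh.
Qed.

Lemma is_lim_scal_inv_p_infty (K : R) : is_lim (fun x => K / x) p_infty 0.
Proof.
  replace (Finite 0) with (Rbar_mult K (Rbar_inv p_infty)) by (simpl; f_equal; ring).
  apply is_lim_scal_l, is_lim_inv; [apply is_lim_id | discriminate].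
Qed.

Definition quartic (A B C x : R) : R := x ^ 4 + A * x ^ 3 + B * x ^ 2 + C * x + 1.

Lemma quartic_ge_half_pow4 (A B C x : R) :
  1 <= x -> 2 * (Rabs A + Rabs B + Rabs C) <= x -> x ^ 4 / 2 <= quartic A B C x.
Proof.
  intros Hx1 HxK. unfold quartic.
  assert (Hx3 : 0 < x ^ 3) by (apply pow_lt; lra).
  assert (Hx23 : x ^ 2 <= x ^ 3) by (simpl; nra).
  assert (Hx13 : x <= x ^ 3) by (simpl; nra).
  pose proof (Rabs_maj2 A). pose proof (Rabs_maj2 B). pose proof (Rabs_maj2 C).
  pose proof (Rabs_pos B). pose proof (Rabs_pos C).
  assert (HA : - Rabs A * x ^ 3 <= A * x ^ 3) by nra.
  assert (HB : - Rabs B * x ^ 3 <= B * x ^ 2) by (assert (0 <= x ^ 2) by nra; nra).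
  assert (HC : - Rabs C * x ^ 3 <= C * x) by nra.
  replace (x ^ 4) with (x * x ^ 3) by ring.
  nra.
Qed.

Lemma cubic_div_quartic_bound (A B C D x : R) :
  1 <= x -> 2 * (Rabs A + Rabs B + Rabs C) <= x ->
  Rabs (D * (x ^ 3 - x) / quartic A B C x) <= 2 * Rabs D / x.
Proof.
  intros Hx1 HxK.
  pose proof (quartic_ge_half_pow4 A B C x Hx1 HxK) as HQ.
  assert (Hx4 : 0 < x ^ 4) by (apply pow_lt; lra).
  assert (Hcub : 0 <= x ^ 3 - x) by (simpl; nra).
  rewrite Rabs_div, Rabs_mult, (Rabs_pos_eq (x ^ 3 - x)), (Rabs_pos_eq (quartic _ _ _ _))
    by lra.
  apply Rle_div_l; [lra|].
  assert (Hscale : 2 * Rabs D / x * (x ^ 4 / 2) = Rabs D * x ^ 3) by (field; lra).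
  assert (0 <= 2 * Rabs D / x)
    by (pose proof (Rabs_pos D); apply Rdiv_le_0_compat; lra).
  pose proof (Rabs_pos D).
  nra.
Qed.

Lemma is_lim_cubic_div_quartic (A B C D : R) :
  is_lim (fun x => D * (x ^ 3 - x) / quartic A B C x) p_infty 0.
Proof.
  apply (is_lim_Rabs_le_0 _ (fun x => 2 * Rabs D / x)).
  - exists (Rmax 1 (2 * (Rabs A + Rabs B + Rabs C))). intros x Hx.
    apply cubic_div_quartic_bound.
    + apply Rlt_le, (Rle_lt_trans _ _ _ (Rmax_l _ _) Hx).
    + apply Rlt_le, (Rle_lt_trans _ _ _ (Rmax_r _ _) Hx).
  - apply is_lim_scal_inv_p_infty.
Qed.

Section RealAxis.

Variables (M a mu : R) (m : Z) (n l : nat).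

Local Notation e := (eps M a).
Local Notation b := (beta M mu l).

Lemma Re_qpoly_real (x : R) :
  Re (qpoly M a mu m n l (RtoC x)) =
  quartic (4 / (b + e) * (2 + e + alpha1 M a mu m))
          (2 * ((16 - b + 3 * e) / (b + e)))
          (4 / (b + e) * (2 + e - alpha1 M a mu m)) x.
Proof. unfold qpoly, alphaC, quartic; simpl. ring. Qed.

Lemma Im_qpoly_real (x : R) :
  Im (qpoly M a mu m n l (RtoC x)) = - (4 / (b + e)) * alpha2 M a mu n * (x ^ 3 - x).
Proof. unfold qpoly, alphaC; simpl. ring. Qed.

Lemma phase_qpoly_real_lim :
  is_lim (fun x => atan (Im (qpoly M a mu m n l (RtoC x)) /
                         Re (qpoly M a mu m n l (RtoC x)))) p_infty 0.
Proof.
  assert (Hratio : is_lim (fun x => Im (qpoly M a mu m n l (RtoC x)) /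
                                    Re (qpoly M a mu m n l (RtoC x))) p_infty 0).
  { eapply is_lim_ext; [|apply is_lim_cubic_div_quartic].
    intro x. rewrite Re_qpoly_real, Im_qpoly_real. reflexivity. }
  rewrite <- atan_0.
  apply is_lim_comp_continuous; [exact Hratio | apply continuous_atan].
Qed.

Lemma Re_qpoly_0 : Re (qpoly M a mu m n l (RtoC 0)) = 1.
Proof. rewrite Re_qpoly_real. unfold quartic. ring. Qed.

Hypothesis hbe : b + e <> 0.

Lemma Im_qpoly_real_eq0 (x : R) :
  alpha2 M a mu n <> 0 -> Im (qpoly M a mu m n l (RtoC x)) = 0 ->
  x = 0 \/ x = 1 \/ x = -1.
Proof.
  intros Ha2 HIm. rewrite Im_qpoly_real in HIm.
  assert (Hc : - (4 / (b + e)) * alpha2 M a mu n <> 0).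
  { apply Rmult_integral_contrapositive_currified; [|exact Ha2].
    apply Ropp_neq_0_compat, Rdiv_neq_0; [lra | exact hbe]. }
  assert (Hfac : x * ((x - 1) * (x + 1)) = 0).
  { apply (Rmult_eq_reg_l (- (4 / (b + e)) * alpha2 M a mu n)); [|exact Hc].
    rewrite Rmult_0_r, <- HIm. ring. }
  destruct (Rmult_integral _ _ Hfac) as [H0 | H1]; [now left|].
  destruct (Rmult_integral _ _ H1); [right; left | right; right]; lra.
Qed.

Lemma Re_qpoly_1 : Re (qpoly M a mu m n l (RtoC 1)) = 16 * (3 + e) / (b + e).
Proof. rewrite Re_qpoly_real. unfold quartic. field. exact hbe. Qed.

Lemma Re_qpoly_m1 : Re (qpoly M a mu m n l (RtoC (-1))) = 16 / (b + e).
Proof. rewrite Re_qpoly_real. unfold quartic. field. exact hbe. Qed.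

Lemma qpoly_real_neq0 (x : R) :
  alpha2 M a mu n <> 0 -> qpoly M a mu m n l (RtoC x) <> RtoC 0.
Proof.
  intros Ha2 Hq.
  assert (He : 0 <= e) by (unfold eps; pose proof (sqrt_pos (1 - a ^ 2 / M ^ 2)); lra).
  pose proof (f_equal Re Hq) as HRe. change (Re (RtoC 0)) with 0 in HRe.
  destruct (Im_qpoly_real_eq0 x Ha2 (f_equal Im Hq)) as [-> | [-> | ->]].
  - rewrite Re_qpoly_0 in HRe. lra.
  - rewrite Re_qpoly_1 in HRe.
    apply (Rdiv_neq_0 (16 * (3 + e)) (b + e)); [lra | exact hbe | exact HRe].
  - rewrite Re_qpoly_m1 in HRe.
    apply (Rdiv_neq_0 16 (b + e)); [lra | exact hbe | exact HRe].
Qed.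

End RealAxis.

Lemma one_sub_sq_div_sq_pos (a M : R) : Rabs a < M -> 0 < 1 - a ^ 2 / M ^ 2.
Proof.
  intro HaM. rewrite <- pow2_abs.
  pose proof (Rabs_pos a).
  assert (HM2 : 0 < M ^ 2) by nra.
  assert (Rabs a ^ 2 / M ^ 2 < 1) by (apply Rlt_div_l; nra).
  lra.
Qed.

Lemma eps_pos (M a : R) : Rabs a < M -> 0 < eps M a.
Proof.
  intro HaM. unfold eps.
  pose proof (sqrt_lt_R0 _ (one_sub_sq_div_sq_pos a M HaM)). lra.
Qed.

Lemma alpha2_pos (M a mu : R) (n : nat) :
  0 < mu -> Rabs a < M -> 0 < alpha2 M a mu n.
Proof.
  intros Hmu HaM. unfold alpha2.
  assert (0 < M) by (pose proof (Rabs_pos a); lra).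
  pose proof (pos_INR n).
  apply Rmult_lt_0_compat.
  - apply Rdiv_lt_0_compat; nra.
  - apply sqrt_lt_R0, one_sub_sq_div_sq_pos, HaM.
Qed.

Theorem mainTheorem8 (M a mu : R) (m : Z) (n l : nat)
  (hM : 0 < M) (ha0 : 0 < a) (haM : a < M) (hmu : 0 < mu)
  (hm : m <> 0%Z) (hl : (Z.abs_nat m <= l)%nat)
  (hbeta : 0 <= beta M mu l) :
  (forall x : R, qpoly M a mu m n l (RtoC x) <> RtoC 0) /\
  (0 <= alpha1 M a mu m -> beta M mu l <= 16 + 3 * eps M a ->
   is_lim (fun x : R => atan (Im (qpoly M a mu m n l (RtoC x)) /
                              Re (qpoly M a mu m n l (RtoC x))))
          p_infty 0).
Proof.
  assert (HaM : Rabs a < M) by (rewrite Rabs_pos_eq; lra).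
  pose proof (eps_pos M a HaM) as He.
  pose proof (alpha2_pos M a mu n hmu HaM) as Ha2.
  split.
  - intro x. apply qpoly_real_neq0; lra.
  - (* the limit holds for all parameters *)
    intros _ _. apply phase_qpoly_real_lim.
Qed.
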